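(* Let $D$ be a directed graph with vertex set $I$ and $A=kD$ its path algebra, and let $r$ be any of $r_b,r_l,r_k,r_j$. Then $r(A)=\mathrm{g.m.}\,r(A)=\sum\{r(A_{ij})\mid i,j\in I\}=kR(D)$.
   Context: $k$ is a field; $D$ may be infinite and have multiple arrows and loops. The path algebra $A=kD=\bigoplus_{i,j\in I}A_{ij}$, where $A_{ij}$ is the $k$-span of paths from $i$ to $j$ of length $\ge1$, plus the trivial path $e_{ii}$ when $i=j$; multiplication is concatenation. A regular path is a path of length $\ge1$ from a vertex $i$ to a vertex $j$ such that there is no path from $j$ to $i$; $R(D)$ is the set of regular paths and $kR(D)$ its $k$-span. $r(A)$ is the ring radical of $A$ ($r_b$ Baer/prime, $r_l$ Levitzki, $r_k$ nil (Köthe), $r_j$ Jacobson). $A_{ij}$ is regarded as a $\Gamma$-ring with $\Gamma=A_{ji}$, and $r(A_{ij})$ is the corresponding $\Gamma$-ring radical (Coppage–Luh). $\mathrm{g.m.}\,r(A)$ is the largest ideal of $A$ of the form $\bigoplus B_{ij}$, $B_{ij}\subseteq A_{ij}$, contained in $r(A)$. *)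

From HB Require Import structures.
From mathcomp Require Import all_boot all_order all_algebra.
From mathcomp Require Import finmap.
From mathcomp.multinomials Require Import monalg.

Set Implicit Arguments.
Unset Strict Implicit.
Unset Printing Implicit Defensive.

Import GRing.Theory.
Local Open Scope ring_scope.

(* Part 1. Radicals of (possibly non-unital) rings, on a carrier T with an *)
(* explicit multiplication [mul].                                          *)
Section RingRadicals.
Variables (T : zmodType) (mul : T -> T -> T).

Definition rideal (S : T -> Prop) : Prop :=
  [/\ S 0, (forall x y, S x -> S y -> S (x - y)) &
      (forall a x, S x -> S (mul a x) /\ S (mul x a))].

Definition rprime (P : T -> Prop) : Prop :=
  [/\ rideal P, (exists x, ~ P x) &
      (forall U V, rideal U -> rideal V ->
         (forall a b, U a -> V b -> P (mul a b)) ->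
         (forall a, U a -> P a) \/ (forall b, V b -> P b))].

Definition rprod (x0 : T) (l : seq T) : T := foldl mul x0 l.

Definition rnilpotent (x : T) : Prop :=
  exists n, rprod x (nseq n x) = 0.

Definition rnil (S : T -> Prop) : Prop := forall x, S x -> rnilpotent x.

(* every finite subset generates a nilpotent subring *)
Definition rloc_nilpotent (S : T -> Prop) : Prop :=
  forall F : seq T, (forall y, y \in F -> S y) ->
    exists n, forall (x0 : T) (l : seq T), x0 \in F -> size l = n ->
      (forall y, y \in l -> y \in F) -> rprod x0 l = 0.

Definition rrqr (x : T) : Prop := exists y, x + y - mul x y = 0.

Definition rquasi_regular (S : T -> Prop) : Prop := forall x, S x -> rrqr x.

Definition r_b (x : T) : Prop := forall P, rprime P -> P x.
(* Levitzki radical: sum (= union) of all locally nilpotent ideals *)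
Definition r_l (x : T) : Prop :=
  exists S, [/\ rideal S, rloc_nilpotent S & S x].
(* Koethe nil radical: sum (= union) of all nil ideals *)
Definition r_k (x : T) : Prop := exists S, [/\ rideal S, rnil S & S x].
(* Jacobson radical: sum (= union) of all quasi-regular ideals *)
Definition r_j (x : T) : Prop :=
  exists S, [/\ rideal S, rquasi_regular S & S x].

End RingRadicals.

(* Part 2. Radicals of Gamma-rings (Coppage-Luh).  The Gamma-ring M and    *)
(* the set Gamma are given as subsets of a common additive group T, with   *)
(* the ternary product [op : M -> Gamma -> M -> M].                        *)
Section GammaRadicals.
Variables (T : zmodType) (M G : T -> Prop) (op : T -> T -> T -> T).

Definition gideal (S : T -> Prop) : Prop :=
  [/\ (forall x, S x -> M x), S 0, (forall x y, S x -> S y -> S (x - y)) &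
      (forall a g x, M a -> G g -> S x -> S (op a g x) /\ S (op x g a))].

Definition gprime (P : T -> Prop) : Prop :=
  [/\ gideal P, (exists x, M x /\ ~ P x) &
      (forall U V, gideal U -> gideal V ->
         (forall a g b, U a -> G g -> V b -> P (op a g b)) ->
         (forall a, U a -> P a) \/ (forall b, V b -> P b))].

(* x0 g1 x1 g2 x2 ... gn xn  for l = [:: (g1,x1); ...; (gn,xn)] *)
Definition gprod (x0 : T) (l : seq (T * T)) : T :=
  foldl (fun acc gx => op acc gx.1 gx.2) x0 l.

Definition gnilpotent (x : T) : Prop :=
  exists n, forall gs : seq T, size gs = n -> (forall g, g \in gs -> G g) ->
    gprod x [seq (g, x) | g <- gs] = 0.

Definition gnil (S : T -> Prop) : Prop := forall x, S x -> gnilpotent x.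

Definition gloc_nilpotent (S : T -> Prop) : Prop :=
  forall F Phi : seq T, (forall y, y \in F -> S y) ->
    (forall g, g \in Phi -> G g) ->
    exists n, forall (x0 : T) (l : seq (T * T)), x0 \in F -> size l = n ->
      (forall gx, gx \in l -> (gx.1 \in Phi) && (gx.2 \in F)) ->
      gprod x0 l = 0.

(* right quasi-regular element of a Gamma-ring: for every gamma in Gamma,
   x is right quasi-regular in the ring (M, (a,b) |-> a gamma b) *)
Definition grqr (x : T) : Prop :=
  forall g, G g -> exists y, M y /\ x + y - op x g y = 0.

Definition gquasi_regular (S : T -> Prop) : Prop := forall x, S x -> grqr x.

Definition gr_b (x : T) : Prop := M x /\ forall P, gprime P -> P x.
Definition gr_l (x : T) : Prop :=
  exists S, [/\ gideal S, gloc_nilpotent S & S x].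
Definition gr_k (x : T) : Prop := exists S, [/\ gideal S, gnil S & S x].
Definition gr_j (x : T) : Prop :=
  exists S, [/\ gideal S, gquasi_regular S & S x].

End GammaRadicals.

Inductive radkind := Baer | Levitzki | Koethe | Jacobson.

Definition ring_radical (r : radkind) (T : zmodType) (mul : T -> T -> T) :
    T -> Prop :=
  match r with
  | Baer => r_b mul | Levitzki => r_l mul
  | Koethe => r_k mul | Jacobson => r_j mul
  end.

Definition gamma_radical (r : radkind) (T : zmodType) (M G : T -> Prop)
    (op : T -> T -> T -> T) : T -> Prop :=
  match r with
  | Baer => gr_b M G op | Levitzki => gr_l M G op
  | Koethe => gr_k M G op | Jacobson => gr_j M G op
  end.

(* A quiver D: vertex type I, arrow type Ar (both arbitrary, possibly      *)
(* infinite), source and target maps.  A path is a start vertex together   *)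
(* with a composable list of arrows (empty list = trivial path e_ii).      *)
Section PathAlgebra.
Variables (k : fieldType) (I Ar : choiceType) (src tgt : Ar -> I).

Definition path_ok (p : I * seq Ar) : bool :=
  if p.2 is a :: s then (src a == p.1) && path (fun b c => tgt b == src c) a s
  else true.

Definition qpath := {p : I * seq Ar | path_ok p}.

Definition pstart (p : qpath) : I := (val p).1.
Definition pend (p : qpath) : I :=
  if (val p).2 is a :: s then tgt (last a s) else (val p).1.
Definition plength (p : qpath) : nat := size (val p).2.

(* concatenation  p then q  (meaningful when pend p = pstart q) *)
Definition pcat (p q : qpath) : qpath :=
  insubd p ((val p).1, (val p).2 ++ (val q).2).

Definition pathalg := {malg k[qpath]}.

Definition pbasis_mul (p q : qpath) : pathalg :=
  if pend p == pstart q then << pcat p q >> else 0.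

Definition pmul (f g : pathalg) : pathalg :=
  \sum_(p <- msupp f) \sum_(q <- msupp g) (f@_p * g@_q) *: pbasis_mul p q.

Definition inA (i j : I) (x : pathalg) : Prop :=
  forall p, p \in msupp x -> pstart p = i /\ pend p = j.

Definition comp (i j : I) (x : pathalg) : pathalg :=
  \sum_(p <- msupp x | (pstart p == i) && (pend p == j)) x@_p *: << p >>.

(* A_ij as a Gamma-ring with Gamma = A_ji, product  a g b = a * g * b *)
Definition gop (a g b : pathalg) : pathalg := pmul (pmul a g) b.

Definition regular_path (p : qpath) : Prop :=
  (0 < plength p)%N /\ ~ (exists q : qpath, pstart q = pend p /\ pend q = pstart p).

Definition kR (x : pathalg) : Prop :=
  forall p, p \in msupp x -> regular_path p.

(* ideals of A of the form (+)_{ij} B_ij with B_ij <= A_ij *)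
Definition graded_ideal (B : pathalg -> Prop) : Prop :=
  rideal pmul B /\ forall x i j, B x -> B (comp i j x).

(* g.m. r(A): the largest graded ideal contained in r(A), taken as the
   union (= sum) of all graded ideals contained in r(A) *)
Definition gm (R : pathalg -> Prop) (x : pathalg) : Prop :=
  exists B, [/\ graded_ideal B, (forall y, B y -> R y) & B x].

Definition radA (r : radkind) : pathalg -> Prop := ring_radical r pmul.

Definition radAij (r : radkind) (i j : I) : pathalg -> Prop :=
  gamma_radical r (inA i j) (inA j i) gop.

Definition sum_radAij (r : radkind) (x : pathalg) : Prop :=
  exists s : seq (I * I * pathalg),
    (forall t, t \in s -> radAij r t.1.1 t.1.2 t.2) /\
    x = \sum_(t <- s) t.2.

End PathAlgebra.

(* Fix a finite set [F] of regular paths.  Since a regular path cannot occur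
   twice along a path, the elements all of whose paths contain [m] distinct
   members of [F] form a multiplicative filtration of ideals vanishing at
   [m = #|F| + 1]; taking [F = msupp x] shows that kR(D) lies in every
   radical.  Conversely, if a path [p] of [x] returns to its start through
   [q], the element [e_i x q] (with [i] the start of [p]) is a nonzero
   element of the corner [e_i A e_i]: comparing longest paths shows that
   such elements are neither nilpotent nor quasi-regular, and the elements
   avoiding the strong component of [i] form a prime ideal missing [x].
   For the Gamma-rings, [A_ij] is its own radical when [Gamma = A_ji = 0],
   and the corner argument shows [r(A_ij) = 0] otherwise. *)

From Pilot Require Import Defs.
From mathcomp Require Import all_boot all_order all_algebra.
From mathcomp Require Import finmap.
From mathcomp.multinomials Require Import monalg.
From Stdlib Require Import Classical.
From mathcomp Require Import zify.

Set Implicit Arguments.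
Unset Strict Implicit.
Unset Printing Implicit Defensive.

Import GRing.Theory.
Local Open Scope ring_scope.

Lemma exists_argmax (T : eqType) (s : seq T) (P : T -> Prop) (f : T -> nat) :
  (exists2 x, x \in s & P x) ->
  exists x, [/\ x \in s, P x & forall y, y \in s -> P y -> (f y <= f x)%N].
Proof.
elim: s => [[]//|a s IH [x]]; rewrite inE => xas Px.
have [[y [ys Py ymax]]|none] := classic (exists y,
  [/\ y \in s, P y & forall z, z \in s -> P z -> (f z <= f y)%N]).
- have [Pa|nPa] := classic (P a); last first.
    exists y; split; rewrite ?inE ?ys ?orbT // => z; rewrite inE.
    by case/orP => [/eqP -> /nPa|/ymax].
  have [ley|lty] := leqP (f a) (f y).
    exists y; split; rewrite ?inE ?ys ?orbT // => z; rewrite inE.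
    by case/orP => [/eqP ->|/ymax].
  exists a; split; rewrite ?inE ?eqxx // => z; rewrite inE.
  by case/orP => [/eqP ->|/ymax zmax /zmax/leq_trans->] //; exact: ltnW.
- have xa : x = a.
    case/orP: xas => [/eqP //|xs]; case: none; exact: IH (ex_intro2 _ _ x xs Px).
  exists a; split; rewrite ?inE ?eqxx -?xa // => z; rewrite inE.
  case/orP => [/eqP -> //|zs Pz]; case: none; exact: IH (ex_intro2 _ _ z zs Pz).
Qed.

Lemma scale_monalgU (K : choiceType) (R : nzRingType) (c : R) (t : K) :
  c *: (<< t >> : {malg R[K]}) = << c *g t >>.
Proof. by apply/malgP => r; rewrite mcoeffZ !mcoeffU; case: eqP; rewrite ?mulr1 ?mulr0. Qed.

Lemma sum_mcoeff_delta (K : choiceType) (R : nzRingType) (a : {malg R[K]}) (p0 : K) :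
  \sum_(p <- msupp a) a@_p * (p == p0)%:R = a@_p0.
Proof.
transitivity ((\sum_(p <- msupp a) << a@_p *g p >>)@_p0); last by rewrite -monalgE.
by rewrite raddf_sum /=; apply: eq_bigr => p _; rewrite mcoeffU mulr_natr.
Qed.

Section RingRadicalTheory.
Variables (T : zmodType) (mul : T -> T -> T).

Lemma rloc_nilpotent_nil (S : T -> Prop) : rloc_nilpotent mul S -> rnil mul S.
Proof.
move=> Sln x Sx; have [|n xn] := Sln [:: x]; first by move=> y /[!inE] /eqP ->.
exists n; apply: xn; rewrite ?mem_head ?size_nseq // => y.
by rewrite mem_nseq => /andP[_ /eqP ->]; exact: mem_head.
Qed.

Section Filtration.
Variables (N : nat -> T -> Prop) (d : nat).
Hypotheses (N0 : forall m, N m 0)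
  (NB : forall m x y, N m x -> N m y -> N m (x - y))
  (N_0 : forall x, N 0 x)
  (NM : forall m n x y, N m x -> N n y -> N (m + n) (mul x y))
  (N_anti : forall m n x, (n <= m)%N -> N m x -> N n x)
  (N_d : forall x, N d x -> x = 0).

Lemma filtration_rideal m : rideal mul (N m).
Proof.
split=> // [x y|a x Nx]; [exact: NB|split; first by rewrite -[m]add0n; exact: NM].
by rewrite -[m]addn0; exact: NM.
Qed.

Lemma filtration_rprod m x l : N m x -> (forall y, y \in l -> N 1 y) ->
  N (m + size l) (rprod mul x l).
Proof.
elim: l m x => [|y l IH] m x Nx Nl /=; first by rewrite addn0.
rewrite /rprod /= -addSnnS -(addn1 m); apply: IH; first by apply: NM Nx (Nl _ _); exact: mem_head.
by move=> z zl; apply: Nl; rewrite inE zl orbT.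
Qed.

Lemma filtration_rprod_eq0 x l : N 1 x -> (forall y, y \in l -> N 1 y) ->
  (d <= (size l).+1)%N -> rprod mul x l = 0.
Proof.
by move=> Nx Nl dl; apply/N_d/(N_anti dl); rewrite -add1n; exact: filtration_rprod.
Qed.

Lemma filtration_rloc_nilpotent : rloc_nilpotent mul (N 1).
Proof.
move=> F NF; exists d => x0 l x0F sl lF.
by apply: filtration_rprod_eq0; [exact: NF|move=> y /lF /NF|rewrite sl].
Qed.

(* Downward induction on [m]: [N 1 * N m] lies in [N m.+1], hence in [P],
   so primality puts [N m] in [P]. *)
Lemma filtration_rprime_sub P x : rprime mul P -> N 1 x -> P x.
Proof.
case=> [[P0 _ _] _ Pprime]; suff: forall t m, (d <= m + t)%N -> (0 < m)%N ->
    forall x, N m x -> P x by apply; rewrite ?addn1.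
elim=> [|t IH] m dm m0 y Ny; first by rewrite (N_d (N_anti _ Ny)) // -[m]addn0.
have NmP a b : N 1 a -> N m b -> P (mul a b).
  by move=> Na Nb; apply: (IH m.+1); rewrite ?addSnnS // -add1n; exact: NM.
have [N1P|] := Pprime _ _ (filtration_rideal 1) (filtration_rideal m) NmP; last exact.
exact/N1P/(N_anti m0).
Qed.

Hypothesis mulrB : forall x y z, mul x (y - z) = mul x y - mul x z.

Fixpoint geom_sum (x : T) (n : nat) : T :=
  if n is n'.+1 then x + mul x (geom_sum x n') else 0.

Let mulr0 y : mul y 0 = 0.
Proof. by rewrite -[X in mul y X](subrr 0) mulrB subrr. Qed.

Let mulrN y u : mul y (- u) = - mul y u.
Proof. by rewrite -sub0r mulrB mulr0 sub0r. Qed.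

Let mulrD y u v : mul y (u + v) = mul y u + mul y v.
Proof. by rewrite -[v in LHS]opprK mulrB mulrN opprK. Qed.

(* With [s := geom_sum x n = x + ... + x^n], the defect [x - s + x s] of
   [- s] as a quasi-inverse of [x] is [x^(n+1)]. *)
Lemma geom_sum_defect x n : N 1 x ->
  N n.+1 (x - geom_sum x n + mul x (geom_sum x n)).
Proof.
move=> Nx; elim: n => [|n IH] /=; first by rewrite mulr0 subr0 addr0.
suff ->: x - (x + mul x (geom_sum x n)) + mul x (x + mul x (geom_sum x n)) =
         mul x (x - geom_sum x n + mul x (geom_sum x n)) by rewrite -add1n; exact: NM.
by rewrite !mulrD mulrN opprD addNKr addrCA addrA.
Qed.

Lemma filtration_quasi_regular : rquasi_regular mul (N 1).
Proof.
move=> x Nx; exists (- geom_sum x d).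
rewrite mulrN opprK.
exact/N_d/(N_anti _ (geom_sum_defect d Nx)).
Qed.

Lemma filtration_sub_radical r x : N 1 x -> ring_radical r mul x.
Proof.
move=> Nx; case: r => /=.
- by move=> P /filtration_rprime_sub; apply.
- by exists (N 1); split=> //; [exact: filtration_rideal|exact: filtration_rloc_nilpotent].
- exists (N 1); split=> //; first exact: filtration_rideal.
  exact/rloc_nilpotent_nil/filtration_rloc_nilpotent.
- by exists (N 1); split=> //; [exact: filtration_rideal|exact: filtration_quasi_regular].
Qed.

End Filtration.
End RingRadicalTheory.

Section GammaRadicalTheory.
Variables (T : zmodType) (M G : T -> Prop) (op : T -> T -> T -> T).

Lemma gamma_radical_sub r x : gamma_radical r M G op x -> M x.
Proof. by case: r => [[]|||] //= [S [[SM _ _ _] _ /SM]]. Qed.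

Section ZeroGamma.
Hypotheses (M0 : M 0) (MB : forall x y, M x -> M y -> M (x - y))
  (G0 : forall g, G g -> g = 0) (op0 : forall a b, op a 0 b = 0).

Lemma zero_gamma_gideal : gideal M G op M.
Proof. by split=> // a g x _ /G0 -> _; rewrite !op0. Qed.

Lemma zero_gamma_radical r x : M x -> gamma_radical r M G op x.
Proof.
move=> Mx; case: r => /=.
- split=> // P [[_ P0 _ _] [y [My nPy]] Pprime].
  have MMP a g b : M a -> G g -> M b -> P (op a g b) by move=> _ /G0 -> _; rewrite op0.
  by case: (Pprime _ _ zero_gamma_gideal zero_gamma_gideal MMP) => /(_ y My).
- exists M; split=> //; first exact: zero_gamma_gideal.
  move=> F Phi _ PhiG; exists 1%N => x0 [|[g y] []] //= _ _ /(_ (g, y)).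
  by rewrite mem_head => /(_ isT) /= /andP[/PhiG /G0 -> _]; rewrite op0.
- exists M; split=> //; first exact: zero_gamma_gideal.
  move=> y _; exists 1%N => [[|g []]] //= _ /(_ g).
  by rewrite mem_head => /(_ isT) /G0 ->; rewrite /gprod /= op0.
- exists M; split=> //; first exact: zero_gamma_gideal.
  move=> y My g /G0 ->; exists (- y); split; first by rewrite -sub0r; exact: MB.
  by rewrite op0 subr0 subrr.
Qed.

End ZeroGamma.
End GammaRadicalTheory.

Section Paths.
Variables (I Ar : choiceType) (src tgt : Ar -> I).

Local Notation qpath := (qpath src tgt).
Local Notation pstart := (@pstart I Ar src tgt).
Local Notation pend := (@pend I Ar src tgt).
Local Notation plength := (@plength I Ar src tgt).
Local Notation pcat := (@pcat I Ar src tgt).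

Lemma pcat_ok (p q : qpath) : pend p = pstart q ->
  path_ok src tgt ((val p).1, (val p).2 ++ (val q).2).
Proof.
case: p q => [[i [|a s]] /= okp] [[j t] okq]; rewrite /pend /pstart //= => e.
  by rewrite e.
move/andP: okp => [sa pth]; rewrite /path_ok /= sa cat_path pth /=.
by case: t okq => [|b t] //= /andP[/eqP sb ->]; rewrite andbT sb -e.
Qed.

Lemma pcat_val (p q : qpath) : pend p = pstart q ->
  val (pcat p q) = ((val p).1, (val p).2 ++ (val q).2).
Proof. by move=> e; rewrite /pcat insubdK //; exact: pcat_ok. Qed.

Lemma pstart_cat (p q : qpath) : pend p = pstart q -> pstart (pcat p q) = pstart p.
Proof. by move=> e; rewrite /pstart pcat_val. Qed.

Lemma pend_cat (p q : qpath) : pend p = pstart q -> pend (pcat p q) = pend q.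
Proof.
case: q => [[j [|b t]] okq] e; rewrite /pend pcat_val //=; first by rewrite cats0; exact: e.
by case: (val p).2 => [|a s] //=; rewrite last_cat.
Qed.

Lemma plength_cat (p q : qpath) : pend p = pstart q ->
  plength (pcat p q) = (plength p + plength q)%N.
Proof. by move=> e; rewrite /plength pcat_val // size_cat. Qed.

Lemma pcat_assoc (p q s : qpath) : pend p = pstart q -> pend q = pstart s ->
  pcat (pcat p q) s = pcat p (pcat q s).
Proof.
move=> e1 e2; apply: val_inj; rewrite pcat_val; last by rewrite pend_cat.
rewrite (@pcat_val p (pcat q s)); last by rewrite pstart_cat.
by rewrite !pcat_val //= catA.
Qed.

Lemma pcat_inj (p q p' q' : qpath) : pend p = pstart q -> pend p' = pstart q' ->
  plength p = plength p' -> pcat p q = pcat p' q' -> p = p' /\ q = q'.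
Proof.
move=> e e' l /(congr1 val); rewrite !pcat_val // => -[e1 e2].
have {}e2 : (val p).2 = (val p').2 /\ (val q).2 = (val q').2.
  by split; [move/(congr1 (take (plength p))): e2|move/(congr1 (drop (plength p))): e2];
    rewrite ?take_size_cat ?drop_size_cat // l ?take_size_cat ?drop_size_cat.
have ep : p = p' by apply: val_inj; rewrite [val p]surjective_pairing e1 e2.1 -surjective_pairing.
split=> //; apply: val_inj; rewrite [val q]surjective_pairing [val q']surjective_pairing e2.2.
by congr (_, _); rewrite -[(val q).1]/(pstart q) -[(val q').1]/(pstart q') -e -e' ep.
Qed.

Definition trivp (i : I) : qpath := exist _ (i, [::]) isT.

Lemma plength_eq0 (p : qpath) : plength p = 0%N -> p = trivp (pstart p).
Proof.
by case: p => [[i [|a s]] okp] //= _; apply: val_inj.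
Qed.

Lemma pcat_trivpl (p : qpath) : pcat (trivp (pstart p)) p = p.
Proof. by apply: val_inj; rewrite pcat_val //= -surjective_pairing. Qed.

Lemma pcat_trivpr (p : qpath) : pcat p (trivp (pend p)) = p.
Proof. by apply: val_inj; rewrite pcat_val // cats0 -surjective_pairing. Qed.

Definition reachable (u v : I) := exists q : qpath, pstart q = u /\ pend q = v.

Lemma reachable_refl u : reachable u u.
Proof. by exists (trivp u). Qed.

Lemma reachable_trans u v w : reachable u v -> reachable v w -> reachable u w.
Proof.
move=> [p [<- e1]] [q [e2 <-]]; exists (pcat p q).
by rewrite pstart_cat ?pend_cat // e1 e2.
Qed.

Lemma reachable_path (p : qpath) : reachable (pstart p) (pend p).
Proof. by exists p. Qed.

Lemma not_regular_reachable (p : qpath) :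
  ~ regular_path p -> reachable (pend p) (pstart p).
Proof.
move=> nreg; have [/plength_eq0 ->|lp] := posnP (plength p); first exact: reachable_refl.
by apply: NNPP => nr; apply: nreg; split.
Qed.

Lemma regular_path_catl (p q : qpath) : pend p = pstart q ->
  regular_path p -> regular_path (pcat p q).
Proof.
move=> e [lp np]; split; first by rewrite plength_cat // ltn_addr.
move=> back; apply: np; apply: (@reachable_trans _ (pend q)).
  by rewrite e; exact: reachable_path.
by move: back; rewrite pend_cat // pstart_cat.
Qed.

Lemma regular_path_catr (p q : qpath) : pend p = pstart q ->
  regular_path q -> regular_path (pcat p q).
Proof.
move=> e [lq nq]; split; first by rewrite plength_cat // ltn_addl.
move=> back; apply: nq; apply: (@reachable_trans _ (pstart p)).
  by move: back; rewrite pend_cat // pstart_cat.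
by rewrite -e; exact: reachable_path.
Qed.

End Paths.

Section PathAlgebra.
Variables (k : fieldType) (I Ar : choiceType) (src tgt : Ar -> I).

Local Notation qpath := (qpath src tgt).
Local Notation pstart := (@pstart I Ar src tgt).
Local Notation pend := (@pend I Ar src tgt).
Local Notation plength := (@plength I Ar src tgt).
Local Notation pcat := (@pcat I Ar src tgt).
Local Notation trivp := (@trivp I Ar src tgt).
Local Notation reachable := (@reachable I Ar src tgt).
Local Notation A := (pathalg k src tgt).
Local Notation kR := (@kR k I Ar src tgt).
Local Notation inA := (@inA k I Ar src tgt).
Local Notation gop := (@gop k I Ar src tgt).

(* Both the product and the monomials [<< c *g p >>] are locked: otherwise
   matching during rewriting unfolds them into finite-map computations. *)
Fact pathmul_key : unit. Proof. by []. Qed.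
Definition pathmul : A -> A -> A := locked_with pathmul_key (@pmul k I Ar src tgt).
Local Notation "f ** g" := (pathmul f g) (at level 40, left associativity).

Fact pmono_key : unit. Proof. by []. Qed.
Definition pmono : k -> qpath -> A := locked_with pmono_key (fun c p => << c *g p >>).

Lemma pathmulE : pathmul = @pmul k I Ar src tgt.
Proof. by rewrite /pathmul unlock. Qed.

Lemma pmonoE c p : pmono c p = << c *g p >>.
Proof. by rewrite /pmono unlock. Qed.

Lemma mcoeff_pmono c p r : (pmono c p)@_r = c *+ (p == r).
Proof. by rewrite pmonoE mcoeffU. Qed.

Lemma msupp_pmono c p q : q \in msupp (pmono c p) -> q = p.
Proof. by rewrite pmonoE => /(fsubsetP msuppU_le); rewrite inE => /eqP. Qed.

Lemma pmono_eq0 c p : (pmono c p == 0) = (c == 0).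
Proof. by rewrite pmonoE monalgU_eq0. Qed.

Lemma pathalgE (f : A) : f = \sum_(p <- msupp f) pmono f@_p p.
Proof. by rewrite {1}[f]monalgE; apply: eq_bigr => p _; rewrite pmonoE. Qed.

Lemma pmulEw (f g : A) (D1 D2 : {fset qpath}) :
  (msupp f `<=` D1)%fset -> (msupp g `<=` D2)%fset ->
  f ** g = \sum_(p <- D1) \sum_(q <- D2) (f@_p * g@_q) *: pbasis_mul k p q.
Proof.
move=> le1 le2; rewrite pathmulE /pmul (big_fset_incl _ le1) /=.
  apply/eq_bigr=> p _; apply/big_fset_incl => // q _ /mcoeff_outdom ->.
  by rewrite mulr0 scale0r.
move=> p _ /mcoeff_outdom fp.
by rewrite big1 => // q _; rewrite fp mul0r scale0r.
Qed.

Lemma pmulE (f g : A) :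
  f ** g = \sum_(p <- msupp f) \sum_(q <- msupp g) (f@_p * g@_q) *: pbasis_mul k p q.
Proof. exact: pmulEw. Qed.

Lemma pmul0l (g : A) : 0 ** g = 0.
Proof. by rewrite pmulE msupp0 big_seq_fset0. Qed.

Lemma pmul0r (f : A) : f ** 0 = 0.
Proof. by rewrite pmulE msupp0 big1 // => p _; rewrite big_seq_fset0. Qed.

Lemma pmulDl (f h g : A) : (f + h) ** g = f ** g + h ** g.
Proof.
rewrite (pmulEw (msuppD_le f h) (fsubset_refl _)).
rewrite (pmulEw (fsubsetUl _ (msupp h)) (fsubset_refl _)).
rewrite (pmulEw (fsubsetUr (msupp f) _) (fsubset_refl _)) -big_split /=.
apply: eq_bigr => p _; rewrite -big_split; apply: eq_bigr => q _ /=.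
by rewrite mcoeffD mulrDl scalerDl.
Qed.

Lemma pmulDr (f g h : A) : f ** (g + h) = f ** g + f ** h.
Proof.
rewrite (pmulEw (fsubset_refl _) (msuppD_le g h)).
rewrite (pmulEw (fsubset_refl _) (fsubsetUl _ (msupp h))).
rewrite (pmulEw (fsubset_refl _) (fsubsetUr (msupp g) _)) -big_split /=.
apply: eq_bigr => p _; rewrite -big_split; apply: eq_bigr => q _ /=.
by rewrite mcoeffD mulrDr scalerDl.
Qed.

Lemma pmulZl (c : k) (f g : A) : (c *: f) ** g = c *: (f ** g).
Proof.
rewrite (pmulEw (msuppZ_le c f) (fsubset_refl _)) pmulE scaler_sumr.
apply: eq_bigr => p _; rewrite scaler_sumr; apply: eq_bigr => q _.
by rewrite mcoeffZ scalerA mulrA.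
Qed.

Lemma pmulZr (c : k) (f g : A) : f ** (c *: g) = c *: (f ** g).
Proof.
rewrite (pmulEw (fsubset_refl _) (msuppZ_le c g)) pmulE scaler_sumr.
apply: eq_bigr => p _; rewrite scaler_sumr; apply: eq_bigr => q _.
by rewrite mcoeffZ scalerA mulrCA.
Qed.

Lemma pmulNr (f g : A) : f ** (- g) = - (f ** g).
Proof. by rewrite -scaleN1r pmulZr scaleN1r. Qed.

Lemma pmulBl (f h g : A) : (f - h) ** g = f ** g - h ** g.
Proof. by rewrite pmulDl -scaleN1r pmulZl scaleN1r. Qed.

Lemma pmulBr (f g h : A) : f ** (g - h) = f ** g - f ** h.
Proof. by rewrite pmulDr pmulNr. Qed.

Lemma pmul_suml (T : Type) (s : seq T) (F : T -> A) g :
  (\sum_(i <- s) F i) ** g = \sum_(i <- s) F i ** g.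
Proof.
elim: s => [|a s IH]; first by rewrite !big_nil pmul0l.
by rewrite !big_cons pmulDl IH.
Qed.

Lemma pmul_sumr (T : Type) (s : seq T) (F : T -> A) f :
  f ** (\sum_(i <- s) F i) = \sum_(i <- s) f ** F i.
Proof.
elim: s => [|a s IH]; first by rewrite !big_nil pmul0r.
by rewrite !big_cons pmulDr IH.
Qed.

Lemma mcoeff_pmul (f g : A) r : (f ** g)@_r =
  \sum_(p <- msupp f) \sum_(q <- msupp g)
     (f@_p * g@_q) * ((pend p == pstart q) && (pcat p q == r))%:R.
Proof.
rewrite pmulE raddf_sum; apply: eq_bigr => p _; rewrite raddf_sum; apply: eq_bigr => q _.
rewrite /= mcoeffZ /pbasis_mul; case: eqP => _ /=; last by rewrite mcoeff0.
by rewrite mcoeffU; case: eqP.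
Qed.

Lemma msupp_pmul (f g : A) r : r \in msupp (f ** g) ->
  exists p q, [/\ p \in msupp f, q \in msupp g, pend p = pstart q & r = pcat p q].
Proof.
rewrite -mcoeff_neq0 mcoeff_pmul => /eqP nz; apply: NNPP => none; apply: nz.
apply: big1_seq => p /andP[_ pf]; apply: big1_seq => q /andP[_ qg].
case: eqP => [e|]; last by rewrite mulr0.
by case: eqP => [e'|]; [case: none; exists p, q|rewrite mulr0].
Qed.

Lemma pmul_pmono (a b : k) (p q : qpath) :
  pmono a p ** pmono b q = if pend p == pstart q then pmono (a * b) (pcat p q) else 0.
Proof.
rewrite !pmonoE (pmulEw msuppU_le msuppU_le) !big_seq_fset1 !mcoeffUU /pbasis_mul.
by case: eqP => _; rewrite ?scaler0 ?scale_monalgU.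
Qed.

Lemma pmulA (f g h : A) : f ** g ** h = f ** (g ** h).
Proof.
rewrite [f]pathalgE !pmul_suml; apply: eq_bigr => p _.
rewrite [g]pathalgE pmul_sumr !pmul_suml pmul_sumr; apply: eq_bigr => q _.
rewrite [h]pathalgE !pmul_sumr; apply: eq_bigr => s _.
rewrite (pmul_pmono f@_p) (pmul_pmono g@_q).
have [e1|ne1] := eqVneq (pend p) (pstart q); have [e2|ne2] := eqVneq (pend q) (pstart s).
- by rewrite !pmul_pmono pend_cat // pstart_cat // e1 e2 !eqxx pcat_assoc // mulrA.
- by rewrite pmul0r pmul_pmono pend_cat // (negbTE ne2).
- by rewrite pmul0l pmul_pmono pstart_cat // (negbTE ne1).
- by rewrite pmul0l pmul0r.
Qed.

Definition starts_at (i : I) (a : A) := {in msupp a, forall p, pstart p = i}.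
Definition ends_at (j : I) (a : A) := {in msupp a, forall p, pend p = j}.

Lemma starts_at_pmono c p : starts_at (pstart p) (pmono c p).
Proof. by move=> q /msupp_pmono ->. Qed.

Lemma ends_at_pmono c p : ends_at (pend p) (pmono c p).
Proof. by move=> q /msupp_pmono ->. Qed.

Lemma starts_at_pmul i (a b : A) : starts_at i a -> starts_at i (a ** b).
Proof. by move=> sa r /msupp_pmul[p [q [pa _ e ->]]]; rewrite pstart_cat // sa. Qed.

Lemma ends_at_pmul j (a b : A) : ends_at j b -> ends_at j (a ** b).
Proof. by move=> eb r /msupp_pmul[p [q [_ qb e ->]]]; rewrite pend_cat // eb. Qed.

Lemma inA_starts_ends i j (a : A) : inA i j a <-> starts_at i a /\ ends_at j a.
Proof.
split=> [h|[sa ea] p pa]; last by rewrite sa ?ea.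
by split=> p /h[].
Qed.

(* Factorisations [pcat p q] of a path with [plength p] fixed are unique, so
   the length bounds leave [(p0, q0)] as the only contributing pair. *)
Lemma mcoeff_pmul_cat (a b : A) p0 q0 : pend p0 = pstart q0 ->
  (forall p q, p \in msupp a -> q \in msupp b -> pend p = pstart q ->
     pcat p q = pcat p0 q0 -> (plength p <= plength p0)%N /\ (plength q <= plength q0)%N) ->
  (a ** b)@_(pcat p0 q0) = a@_p0 * b@_q0.
Proof.
move=> e0 maxl; rewrite mcoeff_pmul -(sum_mcoeff_delta a p0) -(sum_mcoeff_delta b q0).
rewrite big_distrl; apply: eq_big_seq => p pa; rewrite big_distrr; apply: eq_big_seq => q qb /=.
rewrite mulrACA -natrM mulnb; congr (_ * (nat_of_bool _)%:R).
apply/idP/idP => [/andP[/eqP e /eqP ec]|/andP[/eqP -> /eqP ->]]; last by rewrite e0 !eqxx.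
have [lp lq] := maxl p q pa qb e ec.
have /eqP := congr1 plength ec; rewrite !plength_cat // => el.
have [-> ->] : p = p0 /\ q = q0 by apply: pcat_inj => //; lia.
by rewrite !eqxx.
Qed.

Lemma mcoeff_pmul_pmonor (y : A) c p s : pend p = pstart s ->
  (y ** pmono c s)@_(pcat p s) = y@_p * c.
Proof.
move=> e; rewrite mcoeff_pmul_cat ?mcoeff_pmono ?eqxx ?mulr1n //.
move=> p' q' _ /msupp_pmono -> e' /(congr1 plength); rewrite !plength_cat //; lia.
Qed.

Lemma mcoeff_pmul_pmonol (y : A) c s p : pend s = pstart p ->
  (pmono c s ** y)@_(pcat s p) = c * y@_p.
Proof.
move=> e; rewrite mcoeff_pmul_cat ?mcoeff_pmono ?eqxx ?mulr1n //.
move=> p' q' /msupp_pmono -> _ e' /(congr1 plength); rewrite !plength_cat //; lia.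
Qed.

Lemma msupp_neq0 (a : A) : a != 0 -> exists p, p \in msupp a.
Proof.
move=> an; apply: NNPP => none; move: an; rewrite [a]pathalgE big1_seq ?eqxx //.
by move=> p /andP[_ pa]; case: none; exists p.
Qed.

Lemma pmul_neq0 v (a b : A) : ends_at v a -> starts_at v b ->
  a != 0 -> b != 0 -> a ** b != 0.
Proof.
move=> ea sb /msupp_neq0[x xa] /msupp_neq0[y yb].
have [p0 [pa _ maxp]] := exists_argmax (P := fun _ => True) plength (ex_intro2 _ _ x xa Logic.I).
have [q0 [qb _ maxq]] := exists_argmax (P := fun _ => True) plength (ex_intro2 _ _ y yb Logic.I).
have e0 : pend p0 = pstart q0 by rewrite ea ?sb.
apply/eqP => /(congr1 (mcoeff (pcat p0 q0))); rewrite mcoeff0 mcoeff_pmul_cat //.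
  by apply/eqP; rewrite mulf_neq0 // mcoeff_neq0.
by move=> p q pa' qb' _ _; split; [exact: maxp|exact: maxq].
Qed.

Lemma kRD (x y : A) : kR x -> kR y -> kR (x + y).
Proof. by move=> kx ky p /(fsubsetP (msuppD_le x y)) /fsetUP[/kx|/ky]. Qed.

Lemma kR_rideal : rideal pathmul kR.
Proof.
split=> [p|x y kx ky p|a x kx]; first by rewrite msupp0.
  by move=> /(fsubsetP (msuppB_le x y)) /fsetUP[/kx|/ky].
split=> r /msupp_pmul[p [q [pa qx e ->]]].
  exact: regular_path_catr (kx _ qx).
exact: regular_path_catl (kx _ pa).
Qed.

Lemma kR_comp i j (x : A) : kR x -> kR (Defs.comp i j x).
Proof.
move=> kx r rc; apply: kx; move: rc; apply: contraTT => rx.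
rewrite -mcoeff_eq0 raddf_sum /=; apply/eqP/big1_seq => p /andP[_ px].
rewrite mcoeffZ mcoeffU; have [pr|_] := eqVneq p r; last by rewrite mulr0.
by rewrite -pr px in rx.
Qed.

Lemma mcoeff_trivp_pmul (x : A) p : (pmono 1 (trivp (pstart p)) ** x)@_p = x@_p.
Proof. by rewrite -{1}[p]pcat_trivpl mcoeff_pmul_pmonol // mul1r. Qed.

Lemma mcoeff_pmul_at_trivp i (z y : A) :
  (z ** y)@_(trivp i) = z@_(trivp i) * y@_(trivp i).
Proof.
rewrite -{1}[trivp i]pcat_trivpl mcoeff_pmul_cat // => p q _ _ e /(congr1 plength).
by rewrite !plength_cat //= => /eqP; rewrite addn_eq0 => /andP[/eqP-> /eqP->].
Qed.

Lemma not_kR_cycle (x : A) : ~ kR x ->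
  exists p q, [/\ p \in msupp x, pstart q = pend p & pend q = pstart p].
Proof.
move=> nkx; apply: NNPP => none; apply: nkx => p px; apply: NNPP.
by move/not_regular_reachable => [q [sq eq]]; apply: none; exists p, q.
Qed.

Lemma pmul_iter_neq0 i (w y : A) n : starts_at i w -> ends_at i w -> w != 0 ->
  ends_at i y -> y != 0 -> foldl pathmul y (nseq n w) != 0.
Proof.
move=> sw ew wn; elim: n y => [//|n IH] y ey yn /=.
by apply: IH; [exact: ends_at_pmul|exact: pmul_neq0 ey sw yn wn].
Qed.

Lemma rnil_sub_kR (S : A -> Prop) x : rideal pathmul S -> rnil pathmul S -> S x -> kR x.
Proof.
move=> [_ _ Smul] Snil Sx; apply: NNPP => /not_kR_cycle[p [q [px sq eq]]].
pose w := pmono 1 (trivp (pstart p)) ** x ** pmono 1 q.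
have Sw : S w by apply: (Smul _ _ (Smul _ _ Sx).1).2.
have sw : starts_at (pstart p) w by do 2!apply: starts_at_pmul; exact: starts_at_pmono.
have ew : ends_at (pstart p) w by rewrite -eq; apply: ends_at_pmul; exact: ends_at_pmono.
have wn : w != 0.
  apply/eqP => /(congr1 (mcoeff (pcat p q))).
  rewrite mcoeff_pmul_pmonor // mcoeff_trivp_pmul mulr1 mcoeff0 => /eqP.
  by rewrite mcoeff_eq0 px.
have [n wn0] := Snil w Sw.
by have /eqP := pmul_iter_neq0 n sw ew wn ew wn.
Qed.

Section QuasiRegularCorner.
Variables (i : I) (z y : A).
Hypotheses (sz : starts_at i z) (ez : ends_at i z) (zy : z + y - z ** y = 0).

Let mcoeff_zy r : z@_r + y@_r = (z ** y)@_r.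
Proof. by move/eqP: zy; rewrite subr_eq0 => /eqP <-; rewrite mcoeffD. Qed.

Lemma rrqr_corner_neq1 : z@_(trivp i) != 1.
Proof.
apply/eqP => z1; have /eqP := mcoeff_zy (trivp i).
by rewrite mcoeff_pmul_at_trivp z1 mul1r -subr_eq0 addrK oner_eq0.
Qed.

(* Take a longest path [p0] of [z], assumed nontrivial, and a longest path
   [q0] of [y] starting at [i] (one exists, else [z@_p0] is unmatched in
   [z ** y]): the coefficient of [pcat p0 q0] in [z ** y] is
   [z@_p0 * y@_q0 != 0], which [z + y] cannot match unless [q0] is trivial,
   and then [y@_(trivp i) = 1] leaves the coefficient of [trivp i]
   unmatched. *)
Lemma rrqr_corner_trivial : {in msupp z, forall r, plength r = 0%N}.
Proof.
move=> r rz; apply: NNPP => /eqP; rewrite -lt0n => lr.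
have [p0 [p0z _ maxp]] :=
  exists_argmax (P := fun _ => True) plength (ex_intro2 _ _ r rz Logic.I).
have lp0 : (0 < plength p0)%N by apply: leq_trans lr (maxp _ rz _).
have zp0 : z@_p0 != 0 by rewrite mcoeff_neq0.
have [q qy sq] : exists2 q, q \in msupp y & pstart q = i.
  apply: NNPP => none; have := mcoeff_zy p0; rewrite mcoeff_pmul big1_seq.
  - have -> : y@_p0 = 0.
      apply/eqP; rewrite mcoeff_eq0; apply/negP => yp0.
      by apply: none; exists p0; rewrite // sz.
    by rewrite addr0 => /eqP; rewrite (negbTE zp0).
  - move=> p /andP[_ pz]; apply: big1_seq => q /andP[_ qy].
    case: eqP => [e|_]; last by rewrite mulr0.
    by case: none; exists q; rewrite // -e ez.
have [q0 [q0y sq0 maxq]] :=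
  exists_argmax (P := fun q => pstart q = i) plength (ex_intro2 _ _ q qy sq).
have e0 : pend p0 = pstart q0 by rewrite ez ?sq0.
have cR : (z ** y)@_(pcat p0 q0) = z@_p0 * y@_q0.
  rewrite mcoeff_pmul_cat // => p q' pz q'y e _; split; first exact: maxp.
  by apply: maxq; rewrite // -e ez.
have yR : y@_(pcat p0 q0) = 0.
  apply/eqP; rewrite mcoeff_eq0; apply/negP => /maxq.
  rewrite pstart_cat // plength_cat // sz // => /(_ erefl).
  by rewrite -{2}[plength q0]add0n leq_add2r leqNgt lp0.
have [/plength_eq0 q0e|lq0] := posnP (plength q0).
  have eR : pcat p0 q0 = p0 by rewrite q0e sq0 -(ez p0z) pcat_trivpr.
  have y1 : y@_q0 = 1.
    have := mcoeff_zy (pcat p0 q0); rewrite yR addr0 cR eR => /eqP.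
    by rewrite -subr_eq0 -{1}[z@_p0]mulr1 -mulrBr mulf_eq0 (negbTE zp0) subr_eq0 eq_sym => /eqP.
  have /eqP := mcoeff_zy (trivp i).
  by rewrite mcoeff_pmul_at_trivp -sq0 -q0e y1 mulr1 addrC -subr_eq0 addrK oner_eq0.
have zR : z@_(pcat p0 q0) = 0.
  apply/eqP; rewrite mcoeff_eq0; apply/negP => /maxp/(_ Logic.I).
  by rewrite plength_cat // -{2}[plength p0]addn0 leq_add2l leqNgt lq0.
have /eqP := mcoeff_zy (pcat p0 q0); rewrite zR yR addr0 cR eq_sym mulf_eq0.
by rewrite (negbTE zp0) mcoeff_eq0 q0y.
Qed.

End QuasiRegularCorner.

Lemma not_rrqr_cycle (w : A) p q : starts_at (pstart p) w -> p \in msupp w ->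
  pstart q = pend p -> pend q = pstart p -> exists c, ~ rrqr pathmul (w ** pmono c q).
Proof.
move=> sw pw sq eq; have wp : w@_p != 0 by rewrite mcoeff_neq0.
have sz c : starts_at (pstart p) (w ** pmono c q) by exact: starts_at_pmul.
have ez c : ends_at (pstart p) (w ** pmono c q).
  by rewrite -eq; apply: ends_at_pmul; exact: ends_at_pmono.
have [/plength_eq0|lpq] := posnP (plength (pcat p q)).
  rewrite pstart_cat // => pqe; exists (w@_p)^-1 => -[y /(rrqr_corner_neq1 (pstart p))].
  by rewrite -pqe mcoeff_pmul_pmonor // divff // eqxx.
exists 1 => -[y /(rrqr_corner_trivial (sz 1) (ez 1)) triv].
have := triv (pcat p q); rewrite -mcoeff_neq0 mcoeff_pmul_pmonor // mulr1 => /(_ wp).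
by move=> l0; rewrite l0 in lpq.
Qed.

Lemma rquasi_regular_sub_kR (S : A -> Prop) x :
  rideal pathmul S -> rquasi_regular pathmul S -> S x -> kR x.
Proof.
move=> [_ _ Smul] Sqr Sx; apply: NNPP => /not_kR_cycle[p [q [px sq eq]]].
pose w := pmono 1 (trivp (pstart p)) ** x.
have sw : starts_at (pstart p) w by apply: starts_at_pmul; exact: starts_at_pmono.
have pw : p \in msupp w by rewrite -mcoeff_neq0 mcoeff_trivp_pmul mcoeff_neq0.
have [c] := not_rrqr_cycle sw pw sq eq; apply; apply: Sqr.
exact: (Smul _ _ (Smul _ _ Sx).1).2.
Qed.

Definition strongly_connected (u v : I) := reachable u v /\ reachable v u.

Definition in_component (i : I) (r : qpath) :=
  strongly_connected i (pstart r) /\ strongly_connected i (pend r).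

Definition off_component (i : I) (y : A) := {in msupp y, forall r, ~ in_component i r}.

Lemma in_component_cat i p s : pend p = pstart s ->
  in_component i (pcat p s) -> in_component i p /\ in_component i s.
Proof.
move=> e; rewrite /in_component pstart_cat // pend_cat // => -[[ip pi] [iq qi]].
have imid : reachable i (pend p) by apply: reachable_trans ip (reachable_path p).
have midi : reachable (pend p) i by rewrite e; apply: reachable_trans (reachable_path s) qi.
by split; split=> //; split; rewrite -?e.
Qed.

Lemma off_component_rideal i : rideal pathmul (off_component i).
Proof.
split=> [r|x y xo yo r|a x xo]; first by rewrite msupp0.
  by move=> /(fsubsetP (msuppB_le x y)) /fsetUP[/xo|/yo].
split=> r /msupp_pmul[p [q [pa qx e ->]]] /(in_component_cat e)[ip iq].
  exact: xo iq.
exact: xo ip.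
Qed.

(* Products of maximal in-component paths of [a] and [b], joined by a path
   between their endpoints, survive in [a ** c ** b]. *)
Lemma off_component_prime i (U V : A -> Prop) : rideal pathmul V ->
  (forall a b, U a -> V b -> off_component i (a ** b)) ->
  (forall a, U a -> off_component i a) \/ (forall b, V b -> off_component i b).
Proof.
move=> [_ _ Vmul] UV; apply: NNPP => /not_or_and[nU nV].
have [a [Ua na]] : exists a, U a /\ ~ off_component i a.
  by apply: NNPP => none; apply: nU => a Ua; apply: NNPP => na; apply: none; exists a.
have [b [Vb nb]] : exists b, V b /\ ~ off_component i b.
  by apply: NNPP => none; apply: nV => b Vb; apply: NNPP => nb; apply: none; exists b.
have [r1 [r1a ir1]] : exists r, r \in msupp a /\ in_component i r.
  by apply: NNPP => none; apply: na => r ra ir; apply: none; exists r.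
have [r2 [r2b ir2]] : exists r, r \in msupp b /\ in_component i r.
  by apply: NNPP => none; apply: nb => r rb ir; apply: none; exists r.
have [p0 [p0a ip0 maxp]] := exists_argmax plength (ex_intro2 _ _ r1 r1a ir1).
have [q0 [q0b iq0 maxq]] := exists_argmax plength (ex_intro2 _ _ r2 r2b ir2).
have [c [sc ec]] : reachable (pend p0) (pstart q0) by apply: reachable_trans ip0.2.2 iq0.1.1.
have e2 : pend p0 = pstart (pcat c q0) by rewrite pstart_cat.
have iR : in_component i (pcat p0 (pcat c q0)).
  by rewrite /in_component pstart_cat // !pend_cat //; split; [exact: ip0.1|exact: iq0.2].
have cR : (a ** (pmono 1 c ** b))@_(pcat p0 (pcat c q0)) = a@_p0 * b@_q0.
  rewrite mcoeff_pmul_cat ?mcoeff_pmul_pmonol ?mul1r // => p s pa sb e eR.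
  have [ip ic] : in_component i p /\ in_component i s.
    by apply: in_component_cat; rewrite // eR.
  split; first exact: maxp.
  move: sb ic => /msupp_pmul[c' [q [/msupp_pmono -> qb ecq ->]]] /(in_component_cat ecq)[_ iq].
  by rewrite !plength_cat // leq_add2l; exact: maxq.
have : pcat p0 (pcat c q0) \in msupp (a ** (pmono 1 c ** b)).
  by rewrite -mcoeff_neq0 cR mulf_neq0 // mcoeff_neq0.
by move/(UV _ _ Ua (Vmul _ _ Vb).1).
Qed.

Lemma trivp_in_component i : in_component i (trivp i).
Proof. by split; split; exact: reachable_refl. Qed.

Lemma off_component_rprime i : rprime pathmul (off_component i).
Proof.
split; [exact: off_component_rideal| |by move=> U V _; exact: off_component_prime].
exists (pmono 1 (trivp i)) => /(_ (trivp i)); apply; last exact: trivp_in_component.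
by rewrite -mcoeff_neq0 mcoeff_pmono eqxx oner_neq0.
Qed.

Lemma rb_sub_kR x : r_b pathmul x -> kR x.
Proof.
move=> xb; apply: NNPP => /not_kR_cycle[p [q [px sq eq]]].
apply: (xb _ (off_component_rprime (pstart p)) p px).
split; split; [exact: reachable_refl|exact: reachable_refl|exact: reachable_path|].
by exists q.
Qed.

Lemma radical_sub_kR r x : ring_radical r pathmul x -> kR x.
Proof.
case: r => /= [|[S [Sid /rloc_nilpotent_nil Snil Sx]]|[S [Sid Snil Sx]]|[S [Sid Sqr Sx]]].
- exact: rb_sub_kR.
- exact: rnil_sub_kR Sid Snil Sx.
- exact: rnil_sub_kR Sid Snil Sx.
- exact: rquasi_regular_sub_kR Sid Sqr Sx.
Qed.

Definition occurs (p r : qpath) := exists u w,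
  [/\ pend u = pstart p, pend p = pstart w & r = pcat (pcat u p) w].

Lemma occurs_refl p : occurs p p.
Proof.
by exists (trivp (pstart p)), (trivp (pend p)); rewrite pcat_trivpl pcat_trivpr.
Qed.

Lemma occurs_catl p r1 r2 : pend r1 = pstart r2 -> occurs p r1 -> occurs p (pcat r1 r2).
Proof.
move=> e [u [w [e1 e2 r1E]]]; rewrite r1E !pend_cat // in e.
exists u, (pcat w r2); split; rewrite ?pstart_cat // r1E pcat_assoc //.
by rewrite pend_cat.
Qed.

Lemma occurs_catr p r1 r2 : pend r1 = pstart r2 -> occurs p r2 -> occurs p (pcat r1 r2).
Proof.
move=> e [u [w [e1 e2 r2E]]]; rewrite r2E !pstart_cat ?pend_cat // in e.
exists (pcat r1 u), w; split; rewrite ?pend_cat // r2E.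
by rewrite -!pcat_assoc ?pend_cat ?pstart_cat.
Qed.

(* A regular path cannot occur on both sides of a concatenation: the second
   occurrence would provide a path back to the start of the first. *)
Lemma regular_occurs_cat p r1 r2 : regular_path p -> pend r1 = pstart r2 ->
  occurs p r1 -> occurs p r2 -> False.
Proof.
move=> [_ np] e [u [w [e1 e2 r1E]]] [u' [w' [e1' e2' r2E]]]; subst r1 r2.
rewrite !pend_cat ?pstart_cat ?pend_cat // in e.
by apply: np; exists (pcat w u'); rewrite pstart_cat ?pend_cat.
Qed.

Section OccurrenceFiltration.
Variable F : {fset qpath}.
Hypothesis F_regular : {in F, forall p, regular_path p}.

Definition occ_at_least (m : nat) (y : A) := {in msupp y, forall r,
  exists s : seq qpath, [/\ uniq s, (m <= size s)%N & forall p, p \in s -> p \in F /\ occurs p r]}.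

Lemma occ_at_least0 m : occ_at_least m 0.
Proof. by move=> r; rewrite msupp0. Qed.

Lemma occ_at_leastB m x y : occ_at_least m x -> occ_at_least m y -> occ_at_least m (x - y).
Proof. by move=> ox oy r /(fsubsetP (msuppB_le x y)) /fsetUP[/ox|/oy]. Qed.

Lemma occ_at_least_none y : occ_at_least 0 y.
Proof. by move=> r _; exists [::]. Qed.

Lemma occ_at_least_pmul m n a b :
  occ_at_least m a -> occ_at_least n b -> occ_at_least (m + n) (a ** b).
Proof.
move=> oa ob r /msupp_pmul[p [q [pa qb e ->]]].
have [s1 [u1 l1 m1]] := oa p pa; have [s2 [u2 l2 m2]] := ob q qb.
exists (s1 ++ s2); split; last 1 first.
- by move=> t; rewrite mem_cat => /orP[/m1|/m2] [tF o];
    split=> //; [exact: occurs_catl|exact: occurs_catr].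
- rewrite cat_uniq u1 u2 andbT; apply/hasPn => t t2; apply/negP => t1.
  have [tF o1] := m1 t t1; have [_ o2] := m2 t t2.
  exact: regular_occurs_cat (F_regular tF) e o1 o2.
- by rewrite size_cat leq_add.
Qed.

Lemma occ_at_least_anti m n y : (n <= m)%N -> occ_at_least m y -> occ_at_least n y.
Proof.
move=> nm oy r ry; have [s [u l ms]] := oy r ry.
exists (take n s); split; first exact: take_uniq.
  by rewrite size_take; case: ifP => // _; exact: leq_trans nm l.
by move=> p /mem_take /ms.
Qed.

Lemma occ_at_least_eq0 y : occ_at_least (size F).+1 y -> y = 0.
Proof.
move=> oy; apply/eqP; apply: contraT => /msupp_neq0[r ry].
have [s [u l ms]] := oy r ry.
by have := uniq_leq_size u (fun p ps => (ms p ps).1); rewrite leqNgt l.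
Qed.

End OccurrenceFiltration.

Lemma kR_sub_radical r x : kR x -> ring_radical r pathmul x.
Proof.
move=> kx; apply: (@filtration_sub_radical _ _ (occ_at_least (msupp x)) (size (msupp x)).+1).
- exact: occ_at_least0.
- exact: occ_at_leastB.
- exact: occ_at_least_none.
- exact: occ_at_least_pmul.
- exact: occ_at_least_anti.
- exact: occ_at_least_eq0.
- exact: pmulBr.
- move=> r' rx; exists [:: r']; split=> // p; rewrite inE => /eqP ->.
  by split=> //; exact: occurs_refl.
Qed.

Lemma gopE a g b : gop a g b = a ** g ** b.
Proof. by rewrite /gop pathmulE. Qed.

Lemma inA0 i j : inA i j 0.
Proof. by move=> p; rewrite msupp0. Qed.

Lemma inAB i j x y : inA i j x -> inA i j y -> inA i j (x - y).
Proof. by move=> hx hy r /(fsubsetP (msuppB_le x y)) /fsetUP[/hx|/hy]. Qed.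

Lemma inA_pmono c p : inA (pstart p) (pend p) (pmono c p).
Proof. by move=> q /msupp_pmono ->. Qed.

Lemma inA_unreachable_eq0 i j g : ~ reachable i j -> inA i j g -> g = 0.
Proof.
move=> nr gij; apply/eqP; apply: contraT => /msupp_neq0[p /gij[sp ep]].
by case: nr; rewrite -sp -ep; exact: reachable_path.
Qed.

Lemma inA_unreachable_kR i j y : ~ reachable j i -> inA i j y -> kR y.
Proof.
move=> nr yij p /yij[sp ep]; split; last by rewrite sp ep.
rewrite lt0n; apply/negP => /eqP/plength_eq0 pe; apply: nr.
by rewrite -sp -ep pe; exact: reachable_refl.
Qed.

Lemma inA_gop i j l l' a g b : inA i l a -> inA l' j b -> inA i j (gop a g b).
Proof.
move=> /inA_starts_ends[sa _] /inA_starts_ends[_ eb]; apply/inA_starts_ends.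
by rewrite gopE; split; [do 2!apply: starts_at_pmul|apply: ends_at_pmul].
Qed.

Section CycleThroughCorner.
Variables (i j : I) (q : qpath).
Hypotheses (sq : pstart q = j) (eq : pend q = i).

Let inA_pmono_q c : inA j i (pmono c q).
Proof. by rewrite -sq -eq; exact: inA_pmono. Qed.

Lemma gop_neq0 a b : inA i j a -> inA i j b -> a != 0 -> b != 0 ->
  gop a (pmono 1 q) b != 0.
Proof.
move=> /inA_starts_ends[_ ea] /inA_starts_ends[sb _] an bn; rewrite gopE.
have /inA_starts_ends[sq' eq'] := (@inA_pmono_q 1).
apply: (pmul_neq0 _ sb) => //; first exact: ends_at_pmul eq'.
by apply: pmul_neq0 ea sq' an _; rewrite pmono_eq0 oner_neq0.
Qed.

Lemma gprod_iter_neq0 y z n : inA i j y -> inA i j z -> y != 0 -> z != 0 ->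
  gprod gop z (nseq n (pmono 1 q, y)) != 0.
Proof.
move=> yij; elim: n z => [//|n IH] z zij yn zn /=.
by apply: IH => //; [exact: inA_gop zij yij|exact: gop_neq0].
Qed.

Lemma zero_gprime y : inA i j y -> y != 0 ->
  gprime (inA i j) (inA j i) gop (fun t => t = 0).
Proof.
move=> yij yn; split; last first.
- move=> U V [UM _ _ _] [VM _ _ _] UV; apply: NNPP => /not_or_and[nU nV].
  have [a [Ua an]] : exists a, U a /\ a != 0.
    apply: NNPP => none; apply: nU => a Ua; apply: NNPP => /eqP an.
    by apply: none; exists a.
  have [b [Vb bn]] : exists b, V b /\ b != 0.
    apply: NNPP => none; apply: nV => b Vb; apply: NNPP => /eqP bn.
    by apply: none; exists b.
  move: (gop_neq0 (UM _ Ua) (VM _ Vb) an bn).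
  by rewrite (UV _ _ _ Ua (@inA_pmono_q 1) Vb) eqxx.
- by exists y; split=> //; apply/eqP.
- split=> [x ->||x z -> ->|a g x _ _ ->]; rewrite ?subrr ?gopE ?pmul0r ?pmul0l //.
  exact: inA0.
Qed.

(* With [q] in [Gamma], [y] generates the nonzero products [(y q)^n y],
   and [y q] is a corner element of [A_ii]. *)
Lemma gamma_radical_cycle_eq0 r y :
  gamma_radical r (inA i j) (inA j i) gop y -> y = 0.
Proof.
move=> yr; have yij := gamma_radical_sub yr; apply: NNPP => /eqP yn.
case: r yr => /= [[_ yb]|[S [_ Sln Sy]]|[S [_ Snil Sy]]|[S [_ Sqr Sy]]].
- by have y0 := yb _ (zero_gprime yij yn); rewrite y0 eqxx in yn.
- have yS z : z \in [:: y] -> S z by rewrite inE => /eqP ->.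
  have qG g : g \in [:: pmono 1 q] -> inA j i g by rewrite inE => /eqP ->.
  have [n yn0] := Sln _ _ yS qG.
  move: (gprod_iter_neq0 n yij yij yn yn); rewrite yn0 ?eqxx ?mem_head ?size_nseq //.
  by move=> gx /[!mem_nseq] /andP[_ /eqP ->]; rewrite !mem_head.
- have [n yn0] := Snil y Sy.
  move: (gprod_iter_neq0 n yij yij yn yn).
  rewrite -(map_nseq n (fun g => (g, y))) yn0 ?eqxx ?size_nseq //.
  by move=> g /[!mem_nseq] /andP[_ /eqP ->].
- have [p py] := msupp_neq0 yn; have [sp ep] := yij p py.
  have sy : starts_at (pstart p) y by move=> s /yij[-> _].
  have [c] := not_rrqr_cycle sy py (etrans sq (esym ep)) (etrans eq (esym sp)).
  apply; have [y' [y'ij /eqP]] := Sqr y Sy _ (@inA_pmono_q c).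
  rewrite subr_eq0 gopE => /eqP yE; exists (y' ** pmono c q).
  by rewrite -pmulA -pmulDl -pmulBl yE subrr pmul0l.
Qed.

End CycleThroughCorner.

Lemma gamma_radical_sub_kR r i j y :
  gamma_radical r (inA i j) (inA j i) gop y -> kR y.
Proof.
move=> yr; have [[q [sq eq]]|nr] := classic (reachable j i).
  by rewrite (gamma_radical_cycle_eq0 sq eq yr) => p; rewrite msupp0.
exact: inA_unreachable_kR nr (gamma_radical_sub yr).
Qed.

Lemma sum_radAij_sub_kR r x : sum_radAij r x -> kR x.
Proof.
move=> [s [srad ->]]; elim: s srad => [|t s IH] srad; first by rewrite big_nil => p; rewrite msupp0.
rewrite big_cons; apply: kRD; first by apply: gamma_radical_sub_kR (srad t _); exact: mem_head.
by apply: IH => t' ts; apply: srad; rewrite inE ts orbT.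
Qed.

Lemma kR_sub_sum_radAij r x : kR x -> sum_radAij r x.
Proof.
move=> kx; exists [seq ((pstart p, pend p), pmono x@_p p) | p <- msupp x]; split.
  move=> _ /mapP[p px ->] /=; have [_ nr] := kx p px.
  apply: zero_gamma_radical; [exact: inA0|exact: inAB| |by move=> a b; rewrite gopE pmul0r pmul0l|].
    by move=> g; exact: inA_unreachable_eq0.
  exact: inA_pmono.
by rewrite big_map [LHS]pathalgE.
Qed.

Lemma radA_kR r x : radA r x <-> kR x.
Proof.
by rewrite /radA -pathmulE; split; [exact: radical_sub_kR|exact: kR_sub_radical].
Qed.

Lemma gm_radA_kR r x : gm (radA r) x <-> kR x.
Proof.
split=> [[B [_ /(_ x) BA Bx]]|kx]; first exact/(radA_kR r)/BA.
exists kR; split=> //; last by move=> y /(radA_kR r).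
by split=> [|y i j /kR_comp //]; rewrite -pathmulE; exact: kR_rideal.
Qed.

Lemma sum_radAij_kR r x : sum_radAij r x <-> kR x.
Proof. by split; [exact: sum_radAij_sub_kR|exact: kR_sub_sum_radAij]. Qed.

End PathAlgebra.

Theorem theorem3p3 (k : fieldType) (I Ar : choiceType) (src tgt : Ar -> I)
    (r : radkind) (x : pathalg k src tgt) :
  (radA r x <-> gm (radA r) x) /\
  (gm (radA r) x <-> sum_radAij r x) /\
  (sum_radAij r x <-> kR x).
Proof.
rewrite radA_kR gm_radA_kR sum_radAij_kR.
by split; [|split].
Qed.
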